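(* (a) Under the hypotheses of Theorem 4.3 (i.e. $2\le r\le m\le n$, $\mathbf u_1,\dots,\mathbf u_m\in F[t]^n$ of degree at most $k-1$ in $t$, written $\mathbf u_j=\sum_{l=0}^{k-1}\mathbf u_j^{(l)}t^l$, with all $r$-fold wedge products of the $\mathbf u_j$ vanishing modulo $t^k$ and $\mathbf u_1^{(0)}\wedge\dots\wedge\mathbf u_{r-1}^{(0)}\neq0$), for every $w$ with $0\le w<2k$ and every $1\le j_1<\dots<j_{r+1}\le m$, $$\sum_{\substack{l_1+\dots+l_{r+1}=w\\0\le l_i<k}}\mathbf u_{j_1}^{(l_1)}\wedge\dots\wedge\mathbf u_{j_r}^{(l_r)}\wedge\mathbf u_{j_{r+1}}^{(l_{r+1})}=0\quad\text{in }\textstyle\bigwedge^{r+1}F^n.$$ (b) In particular, for $3\le m\le n$ and $k\ge1$, at every point of the Zariski closure $Z_0$ in $\mathcal Z^{m,n}_{2,k}$ of the set of points at which some $x^{(0)}_{i,j}\neq0$, the rows satisfy, for all $0\le w<2k$ and all $1\le j_1<j_2<j_3\le m$, $$\sum_{\substack{l_1+l_2+l_3=w\\0\le l_1,l_2,l_3<k}}\mathbf u_{j_1}^{(l_1)}\wedge\mathbf u_{j_2}^{(l_2)}\wedge\mathbf u_{j_3}^{(l_3)}=0.$$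
   Context: Let $F$ be an algebraically closed field. For integers $1\le r\le m\le n$ and $k\ge 1$, let $S=F[x^{(l)}_{i,j}:1\le i\le m,\ 1\le j\le n,\ 0\le l\le k-1]$, the coordinate ring of $\mathbf A^{mnk}_F$, and let $X(t)$ be the $m\times n$ matrix over $S[t]/(t^k)$ with $(i,j)$ entry $x_{i,j}(t)=\sum_{l=0}^{k-1}x^{(l)}_{i,j}t^l$. $\mathcal I^{m,n}_{r,k}\subseteq S$ is the ideal generated by the coefficients of $t^l$, $0\le l\le k-1$, of all $r\times r$ minors of $X(t)$, and $\mathcal Z^{m,n}_{r,k}\subseteq\mathbf A^{mnk}_F$ is its zero set. For a point of $\mathbf A^{mnk}$, $\mathbf u_i^{(l)}=(x^{(l)}_{i,1},\dots,x^{(l)}_{i,n})\in F^n$ denotes its row of degree $l$. *)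

From HB Require Import structures.
From mathcomp Require Import all_boot all_order all_algebra.
From mathcomp Require Import mpoly.
Set Implicit Arguments.
Unset Strict Implicit.
Unset Printing Implicit Defensive.
Import GRing.Theory.
Local Open Scope ring_scope.

(* A point of A^{mnk}_F : x l is the m x n matrix (x^{(l)}_{i,j})_{i,j}.
   The row u_i^{(l)} is  row i (x l). *)
Definition point (F : fieldType) (m n k : nat) := 'I_k -> 'M[F]_(m, n).

Definition incr (p q : nat) (g : 'I_p -> 'I_q) : bool :=
  [forall a : 'I_p, forall b : 'I_p, (a < b)%N ==> (g a < g b)%N].

(* The p-fold wedge product v_0 /\ ... /\ v_{p-1} in /\^p F^n, given by its
   coordinates on the standard basis e_{g 0} /\ ... /\ e_{g (p-1)}, g strictly
   increasing (the coordinate is the p x p minor on columns g); the entries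
   at non-increasing g are set to 0. *)
Definition wedge (F : comRingType) (p n : nat) (v : 'I_p -> 'rV[F]_n)
  : {ffun {ffun 'I_p -> 'I_n} -> F} :=
  [ffun g : {ffun 'I_p -> 'I_n} =>
     if incr g then \det (\matrix_(a < p, b < p) v a 0 (g b)) else 0].

Definition Xt (F : fieldType) m n k (x : point F m n k) : 'M[{poly F}]_(m, n) :=
  \matrix_(i < m, j < n) \sum_(l < k) x l i j *: 'X^l.

Definition inZ (F : fieldType) (r m n k : nat) (x : point F m n k) : Prop :=
  forall (f : 'I_r -> 'I_m) (g : 'I_r -> 'I_n), incr f -> incr g ->
  forall l : nat, (l < k)%N ->
    (\det (\matrix_(a < r, b < r) Xt x (f a) (g b)))`_l = 0.

Definition flat (F : fieldType) m n k (x : point F m n k) : 'I_(k * (m * n)) -> F :=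
  fun idx => mxvec (\matrix_(l < k, c < m * n) mxvec (x l) 0 c) 0 idx.

Definition zclosure (F : fieldType) m n k (S : point F m n k -> Prop)
  : point F m n k -> Prop :=
  fun x => forall P : {mpoly F[k * (m * n)]},
    (forall y, S y -> P.@[flat y] = 0) -> P.@[flat x] = 0.

Definition Z0 (F : fieldType) m n k : point F m n k -> Prop :=
  fun x => inZ 2 x /\
    zclosure (fun y => inZ 2 y /\
       exists (l0 : 'I_k) (i : 'I_m) (j : 'I_n), (l0 : nat) = 0%N /\ y l0 i j != 0) x.

From HB Require Import structures.
From mathcomp Require Import all_boot all_order all_algebra.
From mathcomp Require Import mpoly.
From mathcomp Require Import fingroup perm zify.
Import GRing.Theory.
Local Open Scope ring_scope.
Set Implicit Arguments.
Unset Strict Implicit.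

(* Let U be a polynomial matrix whose (p+1)-minors are all divisible by d and
   which has a p-minor P coprime to d. Bordering P by a row i and a column c
   gives a (p+1)-minor, so P * U_i is congruent mod d to a combination of the p
   rows of U through P. Hence for a (p+2)-submatrix M, P *: M = E + C V with E
   divisible by d and C V of rank at most p; expanding the determinant row by
   row, every nonzero term takes at least two rows from E, so
   d^2 | P^(p+2) det M and therefore d^2 | det M.
   For U = X(t), d = t^k and P a minor with nonzero constant term (the
   hypothesis of (a)) this kills the coefficients of t^w, w < 2k, of all
   (r+1)-minors, which are the coordinates of the sums of wedge products.
   These coefficients are polynomials in the coordinates of the point, and on
   the dense subset of Z0 the hypothesis holds with r = 2 and P a nonzero
   entry x^(0)_{ij}: this gives (b). *)

Lemma incr_sort_perm q m (f : 'I_q -> 'I_m) :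
  injective f -> exists s : 'S_q, incr (f \o s).
Proof.
move=> f_inj; pose below a := [set b | f b < f a]%N.
have below_lt a : (#|below a| < q)%N.
  rewrite -[X in (_ < X)%N]card_ord -cardsT; apply: proper_card; rewrite properT.
  by apply/eqP => below_full; have := in_setT a; rewrite -below_full inE ltnn.
have below_mono a b : (f a < f b)%N -> (#|below a| < #|below b|)%N.
  move=> fab; apply: proper_card; apply/properP; split; last by exists a; rewrite !inE ?ltnn.
  by apply/subsetP => c; rewrite !inE => /ltn_trans; apply.
pose rank a := Ordinal (below_lt a).
have rank_inj : injective rank.
  move=> a b /(congr1 val) /= eq_ab; apply: f_inj; apply/val_inj.
  by case: (ltngtP (f a) (f b)) => // /below_mono; rewrite eq_ab ltnn.
pose t := perm rank_inj; exists t^-1%g.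
have rank_inv a : #|below (t^-1%g a)| = a.
  by have := congr1 val (permKV t a); rewrite permE.
apply/forallP => a; apply/forallP => b; apply/implyP => ab /=.
case: (ltngtP (f (t^-1%g a)) (f (t^-1%g b))) => // [/below_mono|].
  by rewrite !rank_inv ltnNge ltnW.
by move/val_inj/f_inj/perm_inj => eq_ab; rewrite eq_ab ltnn in ab.
Qed.

Lemma two_preimages_ord0 p (Φ : 'I_p.+2 -> 'I_p.+1) :
  {in [pred a | Φ a != ord0] &, injective Φ} ->
  exists a a', [/\ a != a', Φ a = ord0 & Φ a' = ord0].
Proof.
move=> Φ_inj; set D := [set a | Φ a != ord0].
have D_small : (#|D| <= p)%N.
  rewrite -(card_in_imset (f := Φ)); last by move=> a b; rewrite !inE; apply: Φ_inj.
  have img_sub : Φ @: D \subset [set~ ord0].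
    by apply/subsetP => _ /imsetP [a Da ->]; rewrite !inE in Da *.
  by have := subset_leq_card img_sub; rewrite cardsC1 card_ord.
have : (1 < #|~: D|)%N by have := cardsC D; rewrite card_ord; lia.
move=> /card_gt1P [a [a' [Da Da' neq_aa']]]; exists a, a'.
by move: Da Da'; rewrite !inE !negbK => /eqP -> /eqP ->.
Qed.

Definition ord_cons T q (t : T) (f : 'I_q -> T) : 'I_q.+1 -> T :=
  fun a => oapp f t (unlift ord0 a).

Lemma ord_cons0 T q (t : T) (f : 'I_q -> T) : ord_cons t f ord0 = t.
Proof. by rewrite /ord_cons unlift_none. Qed.

Lemma ord_cons_lift T q (t : T) (f : 'I_q -> T) a : ord_cons t f (lift ord0 a) = f a.
Proof. by rewrite /ord_cons liftK. Qed.

Section DetAlgebra.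

Variable R : comPzRingType.

Lemma det_row_perm q (A : 'M[R]_q) (s : 'S_q) :
  \det (row_perm s A) = (-1) ^+ s * \det A.
Proof. by rewrite row_permE det_mulmx det_perm. Qed.

Lemma det_scale_rows q (c : 'I_q -> R) (A : 'I_q -> 'I_q -> R) :
  \det (\matrix_(a, b) (c a * A a b)) = (\prod_a c a) * \det (\matrix_(a, b) A a b).
Proof.
have -> : \prod_a c a = \det (diag_mx (\row_a c a)).
  by rewrite det_diag; apply: eq_bigr => a _; rewrite mxE.
rewrite -det_mulmx mul_diag_mx.
by congr (\det _); apply/matrixP => a b; rewrite !mxE.
Qed.

Lemma det_sum_rows q r (N : 'I_q -> 'I_r -> 'I_q -> R) :
  \det (\matrix_(a, b) \sum_(φ < r) N a φ b) =
  \sum_(Φ : {ffun 'I_q -> 'I_r}) \det (\matrix_(a, b) N a (Φ a) b).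
Proof.
rewrite /determinant.
under eq_bigr => s _.
  rewrite (eq_bigr (fun a => \sum_(φ < r) N a φ (s a))); last by move=> a _; rewrite mxE.
  rewrite bigA_distr_bigA mulr_sumr.
  over.
rewrite exchange_big /=; apply: eq_bigr => Φ _; apply: eq_bigr => s _.
by congr (_ * _); apply: eq_bigr => a _; rewrite mxE.
Qed.

Lemma det_bordered m n p (U : 'M[R]_(m, n)) (f0 : 'I_p -> 'I_m) (h : 'I_p -> 'I_n)
  i c c0 :
  \det (mxsub (ord_cons i f0) (ord_cons c h) U) =
  U i c * \det (mxsub f0 h U) +
  \sum_(a < p) U (f0 a) c *
    cofactor (mxsub (ord_cons i f0) (ord_cons c0 h) U) (lift ord0 a) ord0.
Proof.
rewrite (expand_det_col _ ord0) big_ord_recl !mxE !ord_cons0; congr (_ * _ + _).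
  rewrite /cofactor addn0 expr0 mul1r; congr (\det _).
  by apply/matrixP => a b; rewrite !mxE !ord_cons_lift.
apply: eq_bigr => a _; rewrite !mxE ord_cons0 ord_cons_lift; congr (_ * (_ * \det _)).
by apply/matrixP => a' b; rewrite !mxE !ord_cons_lift.
Qed.

End DetAlgebra.

Section PolyMinors.

Variable F : fieldType.
Implicit Types (d : {poly F}).

Lemma dvdp_sum (I : finType) (P : pred I) (G : I -> {poly F}) d :
  (forall i, P i -> d %| G i) -> d %| \sum_(i | P i) G i.
Proof. by move=> dG; apply: (big_ind (dvdp d)); [exact: dvdp0 | exact: dvdp_add | ]. Qed.

Lemma dvdp_Xn_coef k (p : {poly F}) :
  'X^k %| p <-> forall l, (l < k)%N -> p`_l = 0.
Proof.
split=> [/divpK <- l lk | low0]; first by rewrite coefMXn lk.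
rewrite -(poly_take_drop k p) dvdp_addr ?dvdp_mull //.
have -> : take_poly k p = 0.
  by apply/polyP => i; rewrite coef_take_poly coef0; case: ifP => // /low0.
exact: dvdp0.
Qed.

Lemma minors_dvd_sort_rows m n q (U : 'M[{poly F}]_(m, n)) d (g : 'I_q -> 'I_n) :
  (forall f, incr f -> d %| \det (mxsub f g U)) ->
  forall f, d %| \det (mxsub f g U).
Proof.
move=> d_incr f; have [/injectiveP f_inj | /injectivePn [a [b nab fab]]] :=
  boolP (injectiveb f); last first.
  by rewrite (determinant_alternate nab) ?dvdp0 // => c; rewrite !mxE fab.
have [s /d_incr] := incr_sort_perm f_inj.
rewrite -[g]/(g \o id) mxsub_comp -row_permEsub det_row_perm.
by move=> /(dvdp_mull ((-1) ^+ s)); rewrite mulrA -expr2 sqrr_sign mul1r.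
Qed.

Lemma minors_dvd_incr m n q (U : 'M[{poly F}]_(m, n)) d :
  (forall (f : 'I_q -> 'I_m) (g : 'I_q -> 'I_n), incr f -> incr g ->
     d %| \det (mxsub f g U)) ->
  forall (f : 'I_q -> 'I_m) (g : 'I_q -> 'I_n), d %| \det (mxsub f g U).
Proof.
have trE (f : 'I_q -> 'I_m) (g : 'I_q -> 'I_n) :
    \det (mxsub f g U) = \det (mxsub g f U^T).
  by rewrite -det_tr; congr (\det _); apply/matrixP => a b; rewrite !mxE.
move=> d_incr f g; apply: minors_dvd_sort_rows => {}f f_incr.
rewrite trE; apply: minors_dvd_sort_rows => {}g g_incr.
by rewrite -trE; apply: d_incr.
Qed.

Lemma dvdp_det_two_rows q (A : 'M[{poly F}]_q) a a' d :
  a != a' -> (forall b, d %| A a b) -> (forall b, d %| A a' b) ->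
  d ^+ 2 %| \det A.
Proof.
move=> neq_aa' dAa dAa'; apply: dvdp_sum => s _; apply: dvdp_mull.
rewrite (bigD1 a) //= (bigD1 a') 1?eq_sym //= mulrA expr2.
by rewrite dvdp_mulr // dvdp_mul.
Qed.

Lemma dvdp_det_add_mul p (E : 'M[{poly F}]_p.+2) (C : 'M_(p.+2, p))
  (V : 'M_(p, p.+2)) d :
  (forall a b, d %| E a b) -> d ^+ 2 %| \det (E + C *m V).
Proof.
move=> dE.
pose γ a (φ : 'I_p.+1) := if unlift ord0 φ is Some α then C a α else 1.
pose W a (φ : 'I_p.+1) b := if unlift ord0 φ is Some α then V α b else E a b.
have -> : E + C *m V = \matrix_(a, b) \sum_(φ < p.+1) γ a φ * W a φ b.
  apply/matrixP => a b; rewrite !mxE big_ord_recl /γ /W unlift_none mul1r.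
  by congr (_ + _); apply: eq_bigr => α _; rewrite liftK.
rewrite det_sum_rows; apply: dvdp_sum => Φ _.
rewrite (det_scale_rows (fun a => γ a (Φ a)) (fun a b => W a (Φ a) b)) dvdp_mull //.
have [/dinjectiveP Φ_inj | /dinjectivePn [a Φa [a' Φa' eqΦ]]] :=
  boolP (dinjectiveb Φ [pred a | Φ a != ord0]).
  have [a [a' [neq_aa' Φa Φa']]] := two_preimages_ord0 Φ_inj.
  by apply: (dvdp_det_two_rows neq_aa') => b; rewrite mxE /W ?Φa ?Φa' unlift_none.
have neq_aa' : a != a' by move: Φa'; rewrite !inE eq_sym => /andP [].
rewrite (determinant_alternate neq_aa') ?dvdp0 // => b; rewrite !mxE /W eqΦ.
case: (unliftP ord0 (Φ a')) => [// | Φa'0].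
by move: Φa'; rewrite !inE Φa'0 eqxx andbF.
Qed.

Lemma minors_dvd_sqr m n p (U : 'M[{poly F}]_(m, n))
  (f0 : 'I_p -> 'I_m) (h : 'I_p -> 'I_n) d :
  (forall (f : 'I_p.+1 -> 'I_m) (g : 'I_p.+1 -> 'I_n), d %| \det (mxsub f g U)) ->
  coprimep (\det (mxsub f0 h U)) d ->
  forall (j : 'I_p.+2 -> 'I_m) (g : 'I_p.+2 -> 'I_n), d ^+ 2 %| \det (mxsub j g U).
Proof.
move=> d_minors coP j g; set P := \det (mxsub f0 h U).
pose C i a := cofactor (mxsub (ord_cons i f0) (ord_cons (g ord0) h) U) (lift ord0 a) ord0.
pose E := \matrix_(a, b) \det (mxsub (ord_cons (j a) f0) (ord_cons (g b) h) U).
have PU : P *: mxsub j g U = E + (\matrix_(a, α) - C (j a) α) *m mxsub f0 g U.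
  apply/matrixP => a b.
  rewrite !mxE (det_bordered U f0 h (j a) (g b) (g ord0)) -/P mulrC.
  rewrite -addrA -big_split /= big1 ?addr0 // => α _.
  by rewrite !mxE mulNr mulrC addrN.
have : d ^+ 2 %| P ^+ p.+2 * \det (mxsub j g U).
  by rewrite -detZ PU dvdp_det_add_mul // => a b; rewrite mxE; apply: d_minors.
by rewrite Gauss_dvdpr // coprimep_expr // coprimep_expl // coprimep_sym.
Qed.

End PolyMinors.

Lemma wedge_neq0 (F : comNzRingType) p n (v : 'I_p -> 'rV[F]_n) :
  wedge v != 0 -> exists g : 'I_p -> 'I_n, \det (\matrix_(a, b) v a 0 (g b)) != 0.
Proof.
move=> wedge_neq; have /existsP [g] : [exists g, wedge v g != 0].
  apply: contraNT wedge_neq => /existsPn wedge0.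
  by apply/eqP/ffunP => g; rewrite [RHS]ffunE; apply/eqP/negbNE.
by rewrite ffunE; case: ifP => [_ det_neq | _]; [exists g | rewrite eqxx].
Qed.

Section Jets.

Variables (F : fieldType) (m n k : nat).
Implicit Type x : point F m n k.

Lemma coef_det_Xt q x (j : 'I_q -> 'I_m) (g : 'I_q -> 'I_n) w :
  (\det (mxsub j g (Xt x)))`_w =
  \sum_(L : {ffun 'I_q -> 'I_k} | (\sum_(a < q) (L a : nat))%N == w)
     \det (\matrix_(a, b) x (L a) (j a) (g b)).
Proof.
have -> : mxsub j g (Xt x) = \matrix_(a, b) \sum_(l < k) 'X^l * (x l (j a) (g b))%:P.
  by apply/matrixP => a b; rewrite !mxE; apply: eq_bigr => l _; rewrite mulrC mul_polyC.
rewrite det_sum_rows coef_sum [RHS]big_mkcond; apply: eq_bigr => L _ /=.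
rewrite (det_scale_rows (fun a => 'X^(L a)) (fun a b => (x (L a) (j a) (g b))%:P)).
have -> : \det (\matrix_(a, b) (x (L a) (j a) (g b))%:P) =
          (\det (\matrix_(a, b) x (L a) (j a) (g b)))%:P.
  by rewrite -det_map_mx; congr (\det _); apply/matrixP => a b; rewrite !mxE.
rewrite -expr_sum mulrC coefCM coefXn eq_sym.
by case: eqP; rewrite ?mulr1 ?mulr0.
Qed.

Lemma det_Xt_horner0 q x (f : 'I_q -> 'I_m) (h : 'I_q -> 'I_n) (l0 : 'I_k) :
  l0 = 0%N :> nat -> (\det (mxsub f h (Xt x))).[0] = \det (mxsub f h (x l0)).
Proof.
move=> l0_0; rewrite -horner_evalE -det_map_mx; congr (\det _).
apply/matrixP => a b; rewrite !mxE rmorph_sum (bigD1 l0) //= big1 ?addr0.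
  by rewrite horner_evalE hornerZ hornerXn l0_0 expr0 mulr1.
move=> l l_neq; rewrite horner_evalE hornerZ hornerXn expr0n.
case: eqP => [l_0 | _]; rewrite ?mulr0 //.
by case/eqP: l_neq; apply/val_inj; rewrite /= l_0 l0_0.
Qed.

Lemma minor_coef_eq0 p x :
  inZ p.+1 x ->
  (exists (f0 : 'I_p -> 'I_m) (h : 'I_p -> 'I_n) (l0 : 'I_k),
     l0 = 0%N :> nat /\ \det (mxsub f0 h (x l0)) != 0) ->
  forall w, (w < 2 * k)%N ->
  forall (j : 'I_p.+2 -> 'I_m) (g : 'I_p.+2 -> 'I_n), (\det (mxsub j g (Xt x)))`_w = 0.
Proof.
move=> x_in [f0 [h [l0 [l0_0 minor_neq0]]]] w w_lt j g.
have /dvdp_Xn_coef -> // : 'X^(k * 2) %| \det (mxsub j g (Xt x)); last by rewrite mulnC.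
rewrite exprM; apply: (minors_dvd_sqr (f0 := f0) (h := h)).
  apply: minors_dvd_incr => f g' f_incr g'_incr.
  by apply/dvdp_Xn_coef => l; apply: x_in.
by rewrite coprimep_expr // coprimepX /root (det_Xt_horner0 _ _ _ l0_0).
Qed.

Lemma degree_sum_wedgeE q x (j : 'I_q -> 'I_m) w (g : {ffun 'I_q -> 'I_n}) :
  (\sum_(l : {ffun 'I_q -> 'I_k} | (\sum_(a < q) (l a : nat))%N == w)
     wedge (fun a => row (j a) (x (l a)))) g =
  if incr g then (\det (mxsub j g (Xt x)))`_w else 0.
Proof.
rewrite sum_ffunE coef_det_Xt; under eq_bigr => l _ do rewrite ffunE.
case: ifP => _; last by rewrite big1.
by apply: eq_bigr => l _; congr (\det _); apply/matrixP => a b; rewrite !mxE.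
Qed.

(* The variable with index mxvec_index l (mxvec_index i c) is the coordinate
   x^(l)_{i,c}, as in [flat]. *)
Definition minor_coef_mpoly q (j : 'I_q -> 'I_m) (g : 'I_q -> 'I_n) w
  : {mpoly F[k * (m * n)]} :=
  \sum_(L : {ffun 'I_q -> 'I_k} | (\sum_(a < q) (L a : nat))%N == w)
    \sum_(s : 'S_q) ((-1) ^+ s : F) *:
      \prod_(a < q) 'X_(mxvec_index (L a) (mxvec_index (j a) (g (s a)))).

Lemma minor_coef_mpolyE q (j : 'I_q -> 'I_m) (g : 'I_q -> 'I_n) w x :
  (minor_coef_mpoly j g w).@[flat x] = (\det (mxsub j g (Xt x)))`_w.
Proof.
rewrite coef_det_Xt rmorph_sum; apply: eq_bigr => L _.
rewrite rmorph_sum; apply: eq_bigr => s _.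
rewrite /= mevalZ rmorph_prod; congr (_ * _); apply: eq_bigr => a _ /=.
by rewrite mevalXU /flat mxvecE mxE mxvecE !mxE.
Qed.

Lemma Z0_minor_coef_eq0 x : Z0 x ->
  forall w, (w < 2 * k)%N ->
  forall (j : 'I_3 -> 'I_m) (g : 'I_3 -> 'I_n), (\det (mxsub j g (Xt x)))`_w = 0.
Proof.
move=> [_ x_closure] w w_lt j g; rewrite -minor_coef_mpolyE; apply: x_closure.
move=> y [y_in [l0 [i [c [l0_0 y_neq0]]]]]; rewrite minor_coef_mpolyE.
apply: (minor_coef_eq0 (p := 1) y_in _ w_lt).
by exists (fun=> i), (fun=> c), l0; rewrite det_mx11 mxE.
Qed.

End Jets.

Theorem corollary4p4 (F : closedFieldType) :
  (forall (r m n k : nat) (x : point F m n k),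
     (2 <= r)%N -> (r <= m)%N -> (m <= n)%N -> (1 <= k)%N ->
     inZ r x ->
     (exists (h0 : (r.-1 <= m)%N) (l0 : 'I_k), (l0 : nat) = 0%N /\
        wedge (fun a : 'I_r.-1 => row (widen_ord h0 a) (x l0)) != 0) ->
     forall (w : nat), (w < 2 * k)%N ->
     forall (j : 'I_r.+1 -> 'I_m), incr j ->
       \sum_(l : {ffun 'I_r.+1 -> 'I_k} | (\sum_(a < r.+1) (l a : nat))%N == w)
          wedge (fun a : 'I_r.+1 => row (j a) (x (l a))) = 0)
  /\
  (forall (m n k : nat) (x : point F m n k),
     (3 <= m)%N -> (m <= n)%N -> (1 <= k)%N ->
     Z0 x ->
     forall (w : nat), (w < 2 * k)%N ->
     forall (j : 'I_3 -> 'I_m), incr j ->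
       \sum_(l : {ffun 'I_3 -> 'I_k} | (\sum_(a < 3) (l a : nat))%N == w)
          wedge (fun a : 'I_3 => row (j a) (x (l a))) = 0).
Proof.
split.
  move=> [//|r] m n k x _ _ _ _ x_in [h0 [l0 [l0_0 wedge_neq]]] w w_lt j _.
  apply/ffunP => g; rewrite degree_sum_wedgeE ffunE; case: ifP => // _.
  apply: (minor_coef_eq0 x_in _ w_lt).
  have [h minor_neq0] := wedge_neq0 wedge_neq.
  exists (widen_ord h0), h, l0; split => //.
  by move: minor_neq0; congr (\det _ != _); apply/matrixP => a b; rewrite !mxE.
move=> m n k x _ _ _ x_in w w_lt j _.
apply/ffunP => g; rewrite degree_sum_wedgeE ffunE; case: ifP => // _.
exact: Z0_minor_coef_eq0.
Qed.
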